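(* Let $\Lambda_1,\Lambda_2,\Gamma$ be $k$-graphs and for $i=1,2$ let $\phi_i:\Gamma\to\Lambda_i$ be an injective $k$-graph morphism such that either $\phi_i(\Gamma)$ is hereditary in $\Lambda_i$ for both $i=1,2$, or $\phi_i(\Gamma)$ is co-hereditary in $\Lambda_i$ for both $i=1,2$. Let $\sim_\phi$ be the smallest equivalence relation on the disjoint union $\Lambda_1\sqcup\Lambda_2$ such that $\phi_1(\gamma)\sim_\phi\phi_2(\gamma)$ for all $\gamma\in\Gamma$. Then $\sim_\phi$ satisfies the following four properties (and hence $(\Lambda_1\sqcup\Lambda_2)/{\sim_\phi}$ is a $k$-graph with the induced structure maps): (1) if $\mu \sim_\phi \nu$ then $d(\mu) = d(\nu)$; (2) if $\alpha \sim_\phi \alpha'$, $\beta \sim_\phi \beta'$, $r(\beta) = s(\alpha)$ and $r(\beta') = s(\alpha')$, then $\alpha\beta \sim_\phi \alpha'\beta'$; (3) if $\alpha\beta \sim_\phi \alpha'\beta'$ and $d(\alpha) = d(\alpha')$, then $\alpha \sim_\phi \alpha'$ and $\beta \sim_\phi \beta'$; (4) if $s(\alpha) \sim_\phi r(\beta)$, then there exist $\alpha'\sim_\phi\alpha$ and $\beta'\sim_\phi\beta$ with $s(\alpha') = r(\beta')$.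
   Context: A $k$-graph is a countable small category $\Lambda$ with a functor $d:\Lambda\to\mathbb{N}^k$ such that, writing $\Lambda^n=d^{-1}(n)$, for all $m,n\in\mathbb{N}^k$ composition is a bijection from $\{(\mu,\nu)\in\Lambda^m\times\Lambda^n: s(\mu)=r(\nu)\}$ onto $\Lambda^{m+n}$; vertices $\Lambda^0$ are identified with identity morphisms, and $r,s$ are range and source maps. A $k$-graph morphism is a degree-preserving functor. The disjoint union of two $k$-graphs is a $k$-graph in the obvious way. For $v\in\Lambda^0$ and $X\subseteq\Lambda$ write $vX=\{\lambda\in X: r(\lambda)=v\}$, $Xv=\{\lambda\in X:s(\lambda)=v\}$, and for $V\subseteq\Lambda^0$, $V\Lambda=r^{-1}(V)$, $\Lambda V=s^{-1}(V)$. A subgraph $\Gamma'\subseteq\Lambda$ is hereditary if $\Gamma'=\Gamma'^0\Lambda$ and co-hereditary if $\Gamma'=\Lambda\Gamma'^0$. *)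

From mathcomp Require Import all_boot.
From Stdlib Require Import Relations.
Set Implicit Arguments.
Unset Strict Implicit.
Unset Printing Implicit Defensive.

Definition NN (k : nat) := {ffun 'I_k -> nat}.
Definition NNadd k (m n : NN k) : NN k := [ffun i => m i + n i].
Definition NN0 k : NN k := [ffun => 0%N].

(* A k-graph: a countable small category whose morphisms form the type
   [kmor]; objects (vertices) are identified with identity morphisms, i.e.
   the elements v with kr v = v (equivalently of the form kr x / ks x).
   Composition [kcomp a b] (= "a b", a after b) is only meaningful when
   ks a = kr b; its value elsewhere is irrelevant. *)
Record kgraph (k : nat) : Type := KGraph {
  kmor :> Type;
  kr : kmor -> kmor;
  ks : kmor -> kmor;
  kcomp : kmor -> kmor -> kmor;
  kdeg : kmor -> NN k;
  kcountable : exists f : kmor -> nat, injective f;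
  kr_r : forall x, kr (kr x) = kr x;
  ks_r : forall x, ks (kr x) = kr x;
  kr_s : forall x, kr (ks x) = ks x;
  ks_s : forall x, ks (ks x) = ks x;
  kr_comp : forall a b, ks a = kr b -> kr (kcomp a b) = kr a;
  ks_comp : forall a b, ks a = kr b -> ks (kcomp a b) = ks b;
  kcomp_idl : forall a, kcomp (kr a) a = a;
  kcomp_idr : forall a, kcomp a (ks a) = a;
  kcomp_assoc : forall a b c, ks a = kr b -> ks b = kr c ->
      kcomp (kcomp a b) c = kcomp a (kcomp b c);
  kdeg_id : forall x, kdeg (kr x) = NN0 k;
  kdeg_comp : forall a b, ks a = kr b ->
      kdeg (kcomp a b) = NNadd (kdeg a) (kdeg b);
  kfact_ex : forall l (m n : NN k), kdeg l = NNadd m n ->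
      exists a b, [/\ ks a = kr b, kdeg a = m, kdeg b = n & kcomp a b = l];
  kfact_uniq : forall a b a' b', ks a = kr b -> ks a' = kr b' ->
      kdeg a = kdeg a' -> kdeg b = kdeg b' -> kcomp a b = kcomp a' b' ->
      a = a' /\ b = b'
}.

Definition kmorphism k (G L : kgraph k) (f : G -> L) : Prop :=
  [/\ (forall x, f (kr x) = kr (f x)),
      (forall x, f (ks x) = ks (f x)),
      (forall a b, ks a = kr b -> f (kcomp a b) = kcomp (f a) (f b))
    & (forall x, kdeg (f x) = kdeg x)].

Definition image_of (A B : Type) (f : A -> B) : B -> Prop :=
  fun y => exists x, f x = y.

(* X hereditary in L :  X = X^0 L = r^{-1}(X^0) *)
Definition hereditary k (L : kgraph k) (X : L -> Prop) : Prop :=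
  forall l, X l <-> X (kr l).
(* X co-hereditary in L :  X = L X^0 = s^{-1}(X^0) *)
Definition cohereditary k (L : kgraph k) (X : L -> Prop) : Prop :=
  forall l, X l <-> X (ks l).

Section Union.
Variables (k : nat) (L1 L2 : kgraph k).
Definition ur (x : L1 + L2) : L1 + L2 :=
  match x with inl a => inl (kr a) | inr b => inr (kr b) end.
Definition us (x : L1 + L2) : L1 + L2 :=
  match x with inl a => inl (ks a) | inr b => inr (ks b) end.
Definition udeg (x : L1 + L2) : NN k :=
  match x with inl a => kdeg a | inr b => kdeg b end.
(* composition; only meaningful for composable pairs (us x = ur y), which
   necessarily lie in the same component *)
Definition ucomp (x y : L1 + L2) : L1 + L2 :=
  match x, y with
  | inl a, inl b => inl (kcomp a b)
  | inr a, inr b => inr (kcomp a b)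
  | _, _ => x
  end.
End Union.

Definition glue_base k (G L1 L2 : kgraph k) (phi1 : G -> L1) (phi2 : G -> L2)
  : relation (L1 + L2) :=
  fun x y => exists g, x = inl (phi1 g) /\ y = inr (phi2 g).
Definition glue_equiv k (G L1 L2 : kgraph k) (phi1 : G -> L1) (phi2 : G -> L2)
  : relation (L1 + L2) :=
  clos_refl_sym_trans (L1 + L2) (glue_base phi1 phi2).

From mathcomp Require Import all_boot.
From Stdlib Require Import Relations.
Set Implicit Arguments.
Unset Strict Implicit.

(* Write emb true g = phi1 g (in the left summand) and emb false g = phi2 g
   (in the right summand).  Because phi1 and phi2 are injective, the
   equivalence relation ~_phi generated by phi1 g ~ phi2 g is already
   "x = y, or x = emb c g and y = emb (~~ c) g for some c and g"
   (glue_equivP); so related elements in the same summand are equal, and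
   elements in different summands are the two images of one g in Gamma.
   Each of the four properties then reduces to a fact inside one k-graph:
   (1) morphisms preserve degrees; (2) injective morphisms reflect
   composability and composites; (3) hereditary and co-hereditary subgraphs
   are closed under taking factors, so a factorisation of phi_i(g) is the
   image of a factorisation of g, and unique factorisation in Gamma glues the
   factors; (4) an element whose range (resp. source) lies in a hereditary
   (resp. co-hereditary) image lies itself in that image. *)

Lemma NNaddI k (m n n' : NN k) : NNadd m n = NNadd m n' -> n = n'.
Proof.
move=> E; apply/ffunP => i; have := congr1 (fun f : NN k => f i) E.
by rewrite !ffunE => /addnI.
Qed.

(* Unique factorisation only needs the degrees of the left factors to agree:
   the degrees of the right factors then agree by cancellation. *)
Lemma kfact_uniq_l k (L : kgraph k) (a b a' b' : L) :
  ks a = kr b -> ks a' = kr b' -> kdeg a = kdeg a' ->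
  kcomp a b = kcomp a' b' -> a = a' /\ b = b'.
Proof.
move=> hab hab' hd E; apply: kfact_uniq => //.
by apply: (@NNaddI _ (kdeg a)); rewrite -kdeg_comp // E kdeg_comp // hd.
Qed.

Definition factor_closed k (L : kgraph k) (X : L -> Prop) : Prop :=
  forall a b, ks a = kr b -> X (kcomp a b) -> X a /\ X b.

Lemma hereditary_factor_closed k (L : kgraph k) (X : L -> Prop) :
  hereditary X -> (forall x, X x -> X (ks x)) -> factor_closed X.
Proof.
move=> hX Xs a b hab Xab.
have Xa : X a by apply/(hX a); rewrite -(kr_comp hab); apply/(hX (kcomp a b)).
by split=> //; apply/(hX b); rewrite -hab; apply: Xs.
Qed.

Lemma cohereditary_factor_closed k (L : kgraph k) (X : L -> Prop) :
  cohereditary X -> (forall x, X x -> X (kr x)) -> factor_closed X.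
Proof.
move=> hX Xr a b hab Xab.
have Xb : X b by apply/(hX b); rewrite -(ks_comp hab); apply/(hX (kcomp a b)).
by split=> //; apply/(hX a); rewrite hab; apply: Xr.
Qed.

Section InjectiveMorphism.
Variables (k : nat) (G L : kgraph k) (f : G -> L).
Hypotheses (hm : kmorphism f) (hi : injective f).

Lemma image_kr x : image_of f x -> image_of f (kr x).
Proof. by case: hm => hr _ _ _ [g <-]; exists (kr g). Qed.

Lemma image_ks x : image_of f x -> image_of f (ks x).
Proof. by case: hm => _ hs _ _ [g <-]; exists (ks g). Qed.

Lemma morph_comp g h :
  ks (f g) = kr (f h) -> ks g = kr h /\ kcomp (f g) (f h) = f (kcomp g h).
Proof.
case: hm => hr hs hc _ E.
have Egh : ks g = kr h by apply: hi; rewrite hs hr.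
by split=> //; rewrite hc.
Qed.

Lemma image_factor a b g : factor_closed (image_of f) ->
  ks a = kr b -> kcomp a b = f g ->
  exists x y, [/\ a = f x, b = f y, ks x = kr y & kcomp x y = g].
Proof.
move=> fc hab hg; have [[x ex] [y ey]] := fc a b hab (ex_intro _ g (esym hg)).
subst a b; have [hxy Exy] := morph_comp hab.
by exists x, y; split=> //; apply: hi; rewrite -Exy.
Qed.

Lemma hereditary_lift l g : hereditary (image_of f) ->
  kr l = f g -> exists y, l = f y /\ kr y = g.
Proof.
move=> hX El; have [y ey] : image_of f l by apply/(hX l); exists g.
by exists y; split=> //; apply: hi; case: hm => hr _ _ _; rewrite hr ey.
Qed.

Lemma cohereditary_lift l g : cohereditary (image_of f) ->
  ks l = f g -> exists y, l = f y /\ ks y = g.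
Proof.
move=> hX El; have [y ey] : image_of f l by apply/(hX l); exists g.
by exists y; split=> //; apply: hi; case: hm => _ hs _ _; rewrite hs ey.
Qed.

End InjectiveMorphism.

Lemma image_factor_closed k (G L : kgraph k) (f : G -> L) :
  kmorphism f -> hereditary (image_of f) \/ cohereditary (image_of f) ->
  factor_closed (image_of f).
Proof.
move=> hm [hX|hX].
- exact: hereditary_factor_closed hX (image_ks hm).
- exact: cohereditary_factor_closed hX (image_kr hm).
Qed.

Section Gluing.
Variables (k : nat) (L1 L2 G : kgraph k) (phi1 : G -> L1) (phi2 : G -> L2).
Hypotheses (hm1 : kmorphism phi1) (hm2 : kmorphism phi2).
Hypotheses (hi1 : injective phi1) (hi2 : injective phi2).

Local Notation R := (glue_equiv phi1 phi2).

Definition emb (c : bool) (g : G) : L1 + L2 :=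
  if c then inl (phi1 g) else inr (phi2 g).

Definition side (x : L1 + L2) : bool := if x is inl _ then true else false.

Lemma side_emb c g : side (emb c g) = c.
Proof. by case: c. Qed.

Lemma side_ur x : side (ur x) = side x.
Proof. by case: x. Qed.

Lemma side_us x : side (us x) = side x.
Proof. by case: x. Qed.

Lemma side_composable a b : ur b = us a -> side b = side a.
Proof. by move=> E; rewrite -side_ur E side_us. Qed.

Lemma emb_inj c c' g g' : emb c g = emb c' g' -> c = c' /\ g = g'.
Proof.
by case: c; case: c' => //= -[] E; [move/hi1: E | move/hi2: E].
Qed.

Lemma udeg_emb c g : udeg (emb c g) = kdeg g.
Proof. by case: c => /=; [case: hm1 | case: hm2]. Qed.

Lemma ur_emb c g : ur (emb c g) = emb c (kr g).
Proof. by case: c => /=; [case: hm1 => -> | case: hm2 => ->]. Qed.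

Lemma us_emb c g : us (emb c g) = emb c (ks g).
Proof. by case: c => /=; [case: hm1 => _ -> | case: hm2 => _ ->]. Qed.

Lemma emb_comp c g h : us (emb c g) = ur (emb c h) ->
  ks g = kr h /\ ucomp (emb c g) (emb c h) = emb c (kcomp g h).
Proof.
case: c => /= -[E].
- by have [? ->] := morph_comp hm1 hi1 E.
- by have [? ->] := morph_comp hm2 hi2 E.
Qed.

Definition glued (x y : L1 + L2) : Prop :=
  exists c g, x = emb c g /\ y = emb (~~ c) g.

Lemma glued_sym x y : glued x y -> glued y x.
Proof. by case=> c [g [-> ->]]; exists (~~ c), g; rewrite negbK. Qed.

Lemma glued_side x y : glued x y -> side y = ~~ side x.
Proof. by case=> c [g [-> ->]]; rewrite !side_emb. Qed.

(* Injectivity of phi1, phi2 makes the generated equivalence a single step. *)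
Lemma glue_equivP x y : R x y <-> x = y \/ glued x y.
Proof.
split.
- elim=> {x y} [x y [g [-> ->]]|x|x y _ [->|/glued_sym]|x y z _ Hxy _ Hyz].
  + by right; exists true, g.
  + by left.
  + by left.
  + by right.
  + case: Hxy Hyz => [-> //|[c [g [-> ->]]]] [<-|[c' [g' [E ->]]]].
    * by right; exists c, g.
    * by case/emb_inj: E => <- <-; rewrite negbK; left.
- case=> [->|[[] [g [-> ->]]]]; first exact: rst_refl.
  + by apply: rst_step; exists g.
  + by apply: rst_sym; apply: rst_step; exists g.
Qed.

Lemma glue_deg x y : R x y -> udeg x = udeg y.
Proof. by case/glue_equivP=> [->|[c [g [-> ->]]]]; rewrite ?udeg_emb. Qed.

Lemma glued_comp a a' b b' : glued a a' -> glued b b' ->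
  ur b = us a -> ur b' = us a' -> glued (ucomp a b) (ucomp a' b').
Proof.
move=> [c [g [-> ->]]] [c' [h [-> ->]]] Eb Eb'.
have ec : c' = c by move/side_composable: Eb; rewrite !side_emb.
subst c'; have [gh Egh] := emb_comp (esym Eb).
have [_ Egh'] := emb_comp (esym Eb').
by exists c, (kcomp g h); rewrite Egh Egh'.
Qed.

Lemma glue_comp a a' b b' : R a a' -> R b b' ->
  ur b = us a -> ur b' = us a' -> R (ucomp a b) (ucomp a' b').
Proof.
move=> /glue_equivP [<-|Ga] /glue_equivP [<-|Gb] Eb Eb'; apply/glue_equivP.
- by left.
- move: (glued_side Gb).
  by rewrite (side_composable Eb) (side_composable Eb'); case: (side a).
- move: (glued_side Ga).
  by rewrite -(side_composable Eb) -(side_composable Eb'); case: (side b).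
- by right; apply: glued_comp.
Qed.

Lemma ucomp_uniq (a b a' b' : L1 + L2) : us a = ur b -> us a' = ur b' ->
  udeg a = udeg a' -> ucomp a b = ucomp a' b' -> a = a' /\ b = b'.
Proof.
case: a => a; case: b => b; case: a' => a'; case: b' => b' //= [hab] [hab'] hd.
- by case=> /(kfact_uniq_l hab hab' hd) [-> ->].
- by case=> /(kfact_uniq_l hab hab' hd) [-> ->].
Qed.

Section Factorisation.
Hypotheses (fc1 : factor_closed (image_of phi1))
           (fc2 : factor_closed (image_of phi2)).

Lemma emb_factor c g a b : us a = ur b -> ucomp a b = emb c g ->
  exists x y, [/\ a = emb c x, b = emb c y & kcomp x y = g].
Proof.
case: c; case: a => a; case: b => b //= [hab] [E].
- by have [x [y [-> -> _ <-]]] := image_factor hm1 hi1 fc1 hab E; exists x, y.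
- by have [x [y [-> -> _ <-]]] := image_factor hm2 hi2 fc2 hab E; exists x, y.
Qed.

Lemma glue_factor a b a' b' : us a = ur b -> us a' = ur b' ->
  R (ucomp a b) (ucomp a' b') -> udeg a = udeg a' -> R a a' /\ R b b'.
Proof.
move=> hab hab' /glue_equivP [E|[c [g [E E']]]] hd.
  by have [-> ->] := ucomp_uniq hab hab' hd E; split; apply/glue_equivP; left.
have [x [y [Ea Eb Exy]]] := emb_factor hab E.
have [x' [y' [Ea' Eb' Exy']]] := emb_factor hab' E'.
subst a b a' b'.
have [xy _] := emb_comp hab; have [xy' _] := emb_comp hab'.
move: hd; rewrite !udeg_emb => hd.
have [<- <-] := kfact_uniq_l xy xy' hd (etrans Exy (esym Exy')).
by split; apply/glue_equivP; right; [exists c, x | exists c, y].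
Qed.

End Factorisation.

Lemma emb_hereditary_lift
  (h1 : hereditary (image_of phi1)) (h2 : hereditary (image_of phi2)) c g b :
  ur b = emb c g -> exists y, b = emb c y /\ kr y = g.
Proof.
case: c; case: b => //= b [Eb].
- by have [y [-> ?]] := hereditary_lift hm1 hi1 h1 Eb; exists y.
- by have [y [-> ?]] := hereditary_lift hm2 hi2 h2 Eb; exists y.
Qed.

Lemma emb_cohereditary_lift
  (h1 : cohereditary (image_of phi1)) (h2 : cohereditary (image_of phi2)) c g a :
  us a = emb c g -> exists x, a = emb c x /\ ks x = g.
Proof.
case: c; case: a => //= a [Ea].
- by have [x [-> ?]] := cohereditary_lift hm1 hi1 h1 Ea; exists x.
- by have [x [-> ?]] := cohereditary_lift hm2 hi2 h2 Ea; exists x.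
Qed.

(* Property (4): if s(a) ~ r(b), moving b (hereditary case) or a
   (co-hereditary case) to the other copy of Gamma makes them composable. *)
Lemma glue_connect
  (hher : (hereditary (image_of phi1) /\ hereditary (image_of phi2)) \/
          (cohereditary (image_of phi1) /\ cohereditary (image_of phi2)))
  a b : R (us a) (ur b) -> exists a' b', [/\ R a' a, R b' b & us a' = ur b'].
Proof.
case/glue_equivP=> [E|[c [g [Ea Eb]]]].
  by exists a, b; split=> //; apply: rst_refl.
case: hher => [[h1 h2]|[h1 h2]].
- have [y [-> Ey]] := emb_hereditary_lift h1 h2 Eb.
  exists a, (emb c y); split; first exact: rst_refl.
  + by apply/glue_equivP; right; exists c, y.
  + by rewrite Ea ur_emb Ey.
- have [x [-> Ex]] := emb_cohereditary_lift h1 h2 Ea.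
  exists (emb (~~ c) x), b; split; last by rewrite Eb us_emb Ex.
  + by apply/glue_equivP; right; exists (~~ c), x; rewrite negbK.
  + exact: rst_refl.
Qed.

End Gluing.

Unset Implicit Arguments.
Theorem mainTheorem2 (k : nat) (L1 L2 G : kgraph k)
  (phi1 : G -> L1) (phi2 : G -> L2)
  (hm1 : kmorphism phi1) (hm2 : kmorphism phi2)
  (hi1 : injective phi1) (hi2 : injective phi2)
  (hher : (hereditary (image_of phi1) /\ hereditary (image_of phi2)) \/
          (cohereditary (image_of phi1) /\ cohereditary (image_of phi2))) :
  let R := glue_equiv phi1 phi2 in
  (* (1) *)
  (forall mu nu, R mu nu -> udeg mu = udeg nu) /\
  (* (2) *)
  (forall a a' b b', R a a' -> R b b' ->
     ur b = us a -> ur b' = us a' -> R (ucomp a b) (ucomp a' b')) /\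
  (* (3) *)
  (forall a b a' b', us a = ur b -> us a' = ur b' ->
     R (ucomp a b) (ucomp a' b') -> udeg a = udeg a' ->
     R a a' /\ R b b') /\
  (* (4) *)
  (forall a b, R (us a) (ur b) ->
     exists a' b', [/\ R a' a, R b' b & us a' = ur b']).
Proof.
move=> R.
have fc1 : factor_closed (image_of phi1).
  by apply: image_factor_closed hm1 _; case: hher => -[? _]; [left|right].
have fc2 : factor_closed (image_of phi2).
  by apply: image_factor_closed hm2 _; case: hher => -[_ ?]; [left|right].
split; first exact: glue_deg hm1 hm2 hi1 hi2.
split; first exact: glue_comp hm1 hm2 hi1 hi2.
split; first exact: glue_factor hm1 hm2 hi1 hi2 fc1 fc2.
exact: glue_connect hm1 hm2 hi1 hi2 hher.
Qed.
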